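(* Let $(\mathcal{C},\mathcal{B},Q,S)$ be an STV election, counted by the procedure described in the context. Let $W\subseteq\mathcal{C}$, let $b,c$ be distinct candidates not in $W$, let $\overline{\tau}=(\overline{\tau}_w)_{w\in W}$ be real numbers, and let $G\subseteq\mathcal{C}$ be such that $L_{\mathrm{basic}}(g)>U_{\mathrm{comp}}(c,g)$ (the assertion $\mathsf{AG}(g,c)$) holds for all $g\in G$. Assume that only candidates in $W\cup\{b,c\}$ can be seated, that all candidates in $W$ are seated (this may happen before, during or after the point considered), that for each $w\in W$ the transfer value of any ballot that was in $w$'s pile at the time $w$ was seated is at most $\overline{\tau}_w$, and that $b$ is eligible. Then $U_{\mathrm{complex}}(c,b,W,\overline{\tau},G)$ is an upper bound on the tally of $c$.
   Context: An STV election is a tuple $(\mathcal{C},\mathcal{B},Q,S)$ where $\mathcal{C}$ is a finite set of candidates, $\mathcal{B}$ is a multiset of ballots (each ballot is a finite sequence of distinct candidates, in order of preference, most preferred first, not necessarily containing all candidates), $S$ is the number of seats, and $Q=\lfloor |\mathcal{B}|/(S+1)\rfloor+1$ is the quota. For a sequence $\pi$, $\mathrm{first}(\pi)$ is its first element, and for a set $X$ of candidates, $\sigma_X(\pi)$ is the subsequence of $\pi$ consisting of the elements of $X$, in their original order. Counting: every ballot starts with value $1$ and is placed in the pile of its first-ranked candidate; a candidate's tally is the total value of the ballots in its pile. A candidate is eligible if neither eliminated nor seated. In each round every eligible candidate with tally at least $Q$ is seated (gets a quota), and every ballot in its pile is given a new value, the transfer value (e.g. unweighted Gregory: $(V_c-Q)/|\mathcal{B}_c|$,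 with $V_c$ the total value and $|\mathcal{B}_c|$ the number of ballots in its pile), and moved to the next-ranked eligible candidate on the ballot (or exhausted). If no candidate reaches a quota, the eligible candidate with smallest tally is eliminated and its ballots move at their current value to their next-ranked eligible candidate (or are exhausted). Counting stops when all $S$ seats are filled or the number of eligible candidates equals the number of unfilled seats, in which case all remaining eligible candidates are seated. The transfer-value rule is assumed to satisfy: an upper bound on a ballot's value is the maximum of the upper bounds on the per-candidate transfer values it was subjected to. Definitions (counts with multiplicity): $L_{\mathrm{basic}}(c)=|\{\beta\in\mathcal{B}:\mathrm{first}(\beta)=c\}|$; $U_{\mathrm{comp}}(c,c')=|\{\beta\in\mathcal{B}:\mathrm{first}(\sigma_{\{c,c'\}}(\beta))=c\}|$. Further, $U_{\mathrm{complex}}(c,b,W,\overline{\tau},G)=\sum_{\beta\in\mathcal{B}}u(\beta)$ (sum over the multiset), where $u(\beta)$ is given by the first applicable case: $u(\beta)=0$ if there is $g\in G\setminus W$ with $\mathrm{first}(\sigma_{\{g,c\}}(\beta))=g$; $u(\beta)=0$ if $c$ does not occur in $\beta$; $u(\beta)=0$ if $\mathrm{first}(\sigma_{\{b,c\}}(\beta))=b$; $u(\beta)=\max\{\overline{\tau}_w: w\in W,\ w \text{ precedes } c \text{ in } \beta\}$ if $\mathrm{first}(\beta)\in W$; and $u(\beta)=1$ otherwise. *)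

From HB Require Import structures.
From mathcomp Require Import all_boot all_order all_algebra.
Set Implicit Arguments. Unset Strict Implicit. Unset Printing Implicit Defensive.
Import Order.TTheory GRing.Theory Num.Theory.
Local Open Scope ring_scope.

Section STV.
Variables (C : finType) (R : realFieldType).

Definition first_in (X : {set C}) (beta : seq C) : option C :=
  ohead [seq x <- beta | x \in X].

Definition L_basic (bs : seq (seq C)) (c : C) : nat :=
  count (fun beta => ohead beta == Some c) bs.

Definition U_comp (bs : seq (seq C)) (c c' : C) : nat :=
  count (fun beta => first_in [set c; c'] beta == Some c) bs.

Definition AG (bs : seq (seq C)) (g c : C) : Prop := (U_comp bs c g < L_basic bs g)%N.

Definition u_complex (c b : C) (W : {set C}) (tau : C -> R) (G : {set C})
    (beta : seq C) : R :=
  if [exists g in G :\: W, first_in [set g; c] beta == Some g] then 0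
  else if c \notin beta then 0
  else if first_in [set b; c] beta == Some b then 0
  else match ohead beta with
       | Some f => if f \in W then
              (* max of tau_w over the w in W preceding c in beta (f is one of them) *)
              \big[Num.max/tau f]_(w <- take (index c beta) beta | w \in W) tau w
            else 1
       | None => 1
       end.

Definition U_complex (bs : seq (seq C)) (c b : C) (W : {set C}) (tau : C -> R)
    (G : {set C}) : R :=
  \sum_(beta <- bs) u_complex c b W tau G beta.

Variable bs : seq (seq C).
Variable S : nat.

Local Notation n := (size bs).

Definition ballot (i : 'I_n) : seq C := nth [::] bs i.

(* Droop quota *)
Definition quota : nat := (n %/ S.+1).+1.

(* A state of the count: seated and eliminated candidates, the pile each
   ballot currently sits in (None = exhausted) and its current value. *)
Record state := State {
  seated : {set C};
  elim : {set C};
  pile : 'I_n -> option C;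
  value : 'I_n -> R }.

Definition is_eligible (st : state) (x : C) : bool :=
  (x \notin seated st) && (x \notin elim st).

Definition eligible_set (st : state) : {set C} := [set x | is_eligible st x].

Definition cand_tally (st : state) (x : C) : R :=
  \sum_(i < n | pile st i == Some x) value st i.

Definition init_state : state :=
  State set0 set0 (fun i => ohead (ballot i)) (fun _ => 1).

(* next-ranked candidate after x on beta that is eligible in st (None = exhausted) *)
Definition next_eligible (st : state) (beta : seq C) (x : C) : option C :=
  ohead [seq y <- drop (index x beta).+1 beta | is_eligible st y].

Definition running (st : state) : Prop :=
  (#|seated st| < S)%N /\ #|eligible_set st| <> (S - #|seated st|)%N.

Definition reaches_quota (st : state) (x : C) : bool :=
  is_eligible st x && ((quota%:R : R) <= cand_tally st x).

(* A round in which quotas are reached: every eligible candidate with tally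
   >= Q is seated, each ballot in its pile gets a transfer value (the rule is
   abstract: any value in [0,1]) and moves to the next eligible candidate. *)
Definition quota_round (st st' : state) : Prop :=
  running st /\
  (exists x, reaches_quota st x) /\
  seated st' = seated st :|: [set x | reaches_quota st x] /\
  elim st' = elim st /\
  (forall i : 'I_n,
     match pile st i with
     | Some x =>
         if reaches_quota st x then
           (0 <= value st' i <= 1) /\ pile st' i = next_eligible st' (ballot i) x
         else pile st' i = pile st i /\ value st' i = value st i
     | None => pile st' i = None /\ value st' i = value st i
     end).

Definition elim_round (st st' : state) : Prop :=
  running st /\
  (forall x, is_eligible st x -> cand_tally st x < quota%:R) /\
  exists e, is_eligible st e /\
    (forall x, is_eligible st x -> cand_tally st e <= cand_tally st x) /\
    seated st' = seated st /\
    elim st' = e |: elim st /\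
    (forall i : 'I_n,
       if pile st i == Some e then
         pile st' i = next_eligible st' (ballot i) e /\ value st' i = value st i
       else pile st' i = pile st i /\ value st' i = value st i).

Definition final_round (st st' : state) : Prop :=
  (#|seated st| < S)%N /\ #|eligible_set st| = (S - #|seated st|)%N /\
  seated st' = seated st :|: eligible_set st /\
  elim st' = elim st /\
  (forall i, pile st' i = pile st i) /\
  (forall i, value st' i = value st i).

Definition step (st st' : state) : Prop :=
  quota_round st st' \/ elim_round st st' \/ final_round st st'.

Definition is_count (tr : nat -> state) (k : nat) : Prop :=
  tr 0%N = init_state /\
  (forall j, (j < k)%N -> step (tr j) (tr j.+1)) /\
  ~ (exists st', step (tr k) st').

End STV.

From mathcomp Require Import all_boot all_order all_algebra.
Import Order.TTheory GRing.Theory Num.Theory.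
Local Open Scope ring_scope.
Set Implicit Arguments. Unset Strict Implicit. Unset Printing Implicit Defensive.

(* As long as b is eligible, every ballot sits with its first eligible
   preference; a ballot whose first preference is eligible still has value 1;
   and a ballot that has left a first preference in W has value at most tau_w
   for some w in W ranked above its current candidate.  The last point holds
   because candidates of W are never eliminated and, while c is unseated, the
   only candidates that transfer a quota surplus are in W (b stays eligible).
   On a ballot in c's pile, b cannot precede c, and neither can any g in G\W:
   such a g must have been eliminated while c was eligible, with a tally at
   least L_basic(g) and at most the tally of c, which is at most U_comp(c,g).
   So each ballot in c's pile has value at most u(beta). *)

Section FirstInSeq.
Variable T : eqType.

Lemma mem_ohead_filter (P : pred T) s x :
  ohead [seq y <- s | P y] = Some x -> P x && (x \in s).
Proof.
by rewrite -mem_filter; case: filter => //= y l [->]; rewrite mem_head.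
Qed.

Lemma index_ohead_filter (P : pred T) s x y :
  ohead [seq z <- s | P z] = Some x -> P y -> (index x s <= index y s)%N.
Proof.
elim: s => //= a s IHs; case: ifP => Pa /=; first by case=> ->; rewrite eqxx.
move=> Hx Py; have /andP[Px _] := mem_ohead_filter Hx.
have ax : (a == x) = false by apply/eqP=> ax; rewrite ax Px in Pa.
have ay : (a == y) = false by apply/eqP=> ay; rewrite ay Py in Pa.
by rewrite ax ay ltnS IHs.
Qed.

Variables P Q : pred T.
Hypothesis subQP : subpred Q P.

Lemma ohead_filter_subpred s x :
  ohead [seq y <- s | P y] = Some x -> Q x -> ohead [seq y <- s | Q y] = Some x.
Proof.
elim: s => //= a s IHs; case: ifP => Pa; first by case=> <- ->.
by rewrite (contraFF (@subQP a) Pa).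
Qed.

Lemma ohead_filter_subpred_None s :
  ohead [seq y <- s | P y] = None -> ohead [seq y <- s | Q y] = None.
Proof.
elim: s => //= a s IHs; case: ifP => // Pa.
by rewrite (contraFF (@subQP a) Pa).
Qed.

Lemma ohead_filter_drop_index s x :
  ohead [seq y <- s | P y] = Some x -> ~~ Q x ->
  ohead [seq y <- drop (index x s).+1 s | Q y] = ohead [seq y <- s | Q y].
Proof.
elim: s => //= a s IHs; case: ifP => Pa.
  by case=> <- Qa; rewrite eqxx drop0 (negbTE Qa).
move=> Hx Qx; have /andP[Px _] := mem_ohead_filter Hx.
have -> : (a == x) = false by apply/eqP=> ax; rewrite ax Px in Pa.
by rewrite /= IHs // (contraFF (@subQP a) Pa).
Qed.

Lemma index_ohead_filter_lt s x y :
  ohead [seq z <- s | P z] = Some x -> ohead [seq z <- s | Q z] = Some y ->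
  ~~ Q x -> (index x s < index y s)%N.
Proof.
move=> Hx Hy Qx; have /andP[_ xs] := mem_ohead_filter Hx.
have /andP[Qy ys] := mem_ohead_filter Hy.
rewrite ltn_neqAle (index_ohead_filter Hx (subQP Qy)) andbT.
by apply: contraNneq Qx => /(index_inj x xs ys) ->.
Qed.

End FirstInSeq.

Lemma ex_switch (P : pred nat) j :
  ~~ P 0%N -> P j -> exists2 t, (t < j)%N & ~~ P t && P t.+1.
Proof.
elim: j => [/negbTE -> //|j IHj] P0 Pj1.
case Pj: (P j); last by exists j; rewrite ?Pj.
by have [t tj Pt] := IHj P0 Pj; exists t => //; apply: ltnW.
Qed.

Section Count.
Variables (C : finType) (R : realFieldType) (bs : seq (seq C)) (S : nat).
Variables (W : {set C}) (b c : C) (tau : C -> R).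
Local Notation n := (size bs).
Local Notation state := (state R bs).

Definition first_eligible (s : state) (beta : seq C) : option C :=
  ohead [seq x <- beta | is_eligible s x].

Record count_inv (s : state) : Prop := CountInv {
  pile_first_eligible : forall i, pile s i = first_eligible s (ballot i);
  value_in01 : forall i, 0 <= value s i <= 1;
  value_first_pref : forall i f,
    ohead (ballot i) = Some f -> is_eligible s f -> value s i = 1;
  value_transferred : c \notin seated s -> forall i x f,
    pile s i = Some x -> ohead (ballot i) = Some f -> f \in W -> x != f ->
    exists2 w, w \in W &
      (index w (ballot i) < index x (ballot i))%N /\ value s i <= tau w }.

Lemma first_eligible_head (s : state) beta f :
  ohead beta = Some f -> is_eligible s f -> first_eligible s beta = Some f.
Proof. by case: beta => //= a l [->]; rewrite /first_eligible /= => ->. Qed.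

Lemma pile_eligible s i x : count_inv s -> pile s i = Some x -> is_eligible s x.
Proof.
by move=> inv; rewrite pile_first_eligible // => /mem_ohead_filter/andP[].
Qed.

Lemma count_inv_init : count_inv (init_state R bs).
Proof.
split=> //= [i|i|_ i x f -> [->]]; last by rewrite eqxx.
  rewrite /first_eligible (@eq_filter _ _ predT) ?filter_predT // => x.
  by rewrite /is_eligible !inE.
by rewrite ler01 lexx.
Qed.

Section QuotaRound.
Variables s s' : state.
Hypotheses (round : quota_round S s s') (inv : count_inv s).

Lemma quota_round_eligible x :
  is_eligible s' x = is_eligible s x && ~~ reaches_quota S s x.
Proof.
rewrite /is_eligible; case: round => _ [_ [-> [-> _]]].
rewrite in_setU inE negb_or.
by case: (x \in seated s); case: (x \in elim s); case: (reaches_quota S s x).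
Qed.

Lemma quota_round_subpred : subpred (is_eligible s') (is_eligible s).
Proof. by move=> x; rewrite quota_round_eligible => /andP[]. Qed.

Lemma quota_round_pile i : pile s' i = first_eligible s' (ballot i).
Proof.
have Fi := pile_first_eligible inv i.
case: round => _ [_ [_ [_ /(_ i)]]]; case: (pile s i) Fi => [x Fx|F0]; last first.
  by case=> -> _; rewrite /first_eligible
    (ohead_filter_subpred_None quota_round_subpred (esym F0)).
have /andP[xe _] := mem_ohead_filter (esym Fx).
case: ifP => Rx [].
  move=> _ ->; apply: (ohead_filter_drop_index quota_round_subpred (esym Fx)).
  by rewrite quota_round_eligible Rx andbF.
move=> -> _; rewrite /first_eligible.
rewrite (ohead_filter_subpred quota_round_subpred (esym Fx)) //.
by rewrite quota_round_eligible xe Rx.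
Qed.

Hypotheses (seated_ok : forall x, x \in seated s' -> x \in W :|: [set b; c])
  (b_eligible : is_eligible s' b)
  (tau_ok : forall w i, w \in W -> reaches_quota S s w -> pile s i = Some w ->
     value s' i <= tau w).

Lemma quota_round_transfer_W x :
  reaches_quota S s x -> c \notin seated s' -> x \in W.
Proof.
move=> Rx cN; have xs : x \in seated s'.
  by case: round => _ [_ [-> _]]; rewrite in_setU inE Rx orbT.
move: (seated_ok xs); rewrite !inE => /orP[//|/orP[]] /eqP xbc.
  by move: b_eligible; rewrite /is_eligible -xbc xs.
by rewrite -xbc xs in cN.
Qed.

Lemma count_inv_quota : count_inv s'.
Proof.
split=> [|i|i f hf|cN i y f Hy hf fW yf]; first exact: quota_round_pile.
- case: round => _ [_ [_ [_ /(_ i)]]].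
  by case: (pile s i) => [x|]; [case: ifP => _ [] // _ ->|case=> _ ->];
    apply: value_in01.
- rewrite quota_round_eligible => /andP[fe nRf].
  have Pf : pile s i = Some f.
    by rewrite (pile_first_eligible inv) (first_eligible_head hf fe).
  case: round => _ [_ [_ [_ /(_ i)]]]; rewrite Pf (negbTE nRf) => -[_ ->].
  exact: value_first_pref hf fe.
have cN0 : c \notin seated s.
  by apply: contra cN; case: round => _ [_ [-> _]]; rewrite in_setU => ->.
have Fi := pile_first_eligible inv i.
case: round => _ [_ [_ [_ /(_ i)]]].
case Ep: (pile s i) Fi => [x|] Fx; last by case=> Hn; rewrite Hn in Hy.
case: ifP => Rx [].
  move=> _ _; have xW := quota_round_transfer_W Rx cN.
  exists x => //; split; last exact: tau_ok xW Rx Ep.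
  apply: (index_ohead_filter_lt quota_round_subpred (esym Fx)).
    by rewrite -Hy quota_round_pile.
  by rewrite quota_round_eligible Rx andbF.
move=> Hp ->; move: Hy yf; rewrite Hp => -[<-] xf.
exact: (value_transferred inv cN0 Ep hf fW xf).
Qed.

End QuotaRound.

Section ElimRound.
Variables (s s' : state) (e : C).
Hypotheses (inv : count_inv s) (seated_eq : seated s' = seated s)
  (elim_eq : elim s' = e |: elim s)
  (move_e : forall i, if pile s i == Some e
     then pile s' i = next_eligible s' (ballot i) e /\ value s' i = value s i
     else pile s' i = pile s i /\ value s' i = value s i).

Lemma elim_round_eligible x : is_eligible s' x = is_eligible s x && (x != e).
Proof.
rewrite /is_eligible seated_eq elim_eq in_setU1.
by case: (x \in seated s); case: (x \in elim s); case: (x == e).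
Qed.

Lemma elim_round_subpred : subpred (is_eligible s') (is_eligible s).
Proof. by move=> x; rewrite elim_round_eligible => /andP[]. Qed.

Lemma elim_round_value i : value s' i = value s i.
Proof. by have := move_e i; case: ifP => _ []. Qed.

Lemma elim_round_pile i : pile s' i = first_eligible s' (ballot i).
Proof.
have Fi := pile_first_eligible inv i.
have := move_e i; case: eqP => [Pe [-> _]|Pe [-> _]].
  rewrite Pe in Fi; apply: (ohead_filter_drop_index elim_round_subpred (esym Fi)).
  by rewrite elim_round_eligible eqxx andbF.
rewrite Fi /first_eligible; case Fx: ohead => [x|]; last first.
  by rewrite (ohead_filter_subpred_None elim_round_subpred Fx).
have /andP[xe _] := mem_ohead_filter Fx.
rewrite (ohead_filter_subpred elim_round_subpred Fx) // elim_round_eligible xe.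
by apply/eqP => x_e; apply: Pe; rewrite Fi /first_eligible Fx x_e.
Qed.

Hypothesis W_not_elim : forall w, w \in W -> w \notin elim s'.

Lemma count_inv_elim : count_inv s'.
Proof.
split=> [|i|i f hf|cN i y f Hy hf fW yf]; first exact: elim_round_pile.
- by rewrite elim_round_value; apply: value_in01.
- by rewrite elim_round_eligible elim_round_value => /andP[fe _];
    apply: value_first_pref hf fe.
have cN0 : c \notin seated s by rewrite -seated_eq.
rewrite elim_round_value; have := move_e i; case: eqP => [Pe [Py _]|Pe [Py _]].
  have ef : e != f.
    by apply: contraNneq (W_not_elim fW) => <-; rewrite elim_eq setU11.
  have [w wW [lt_we V]] := value_transferred inv cN0 Pe hf fW ef.
  exists w => //; split=> //; apply: ltn_trans lt_we _.
  have Fe : first_eligible s (ballot i) = Some e by rewrite -pile_first_eligible.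
  apply: (index_ohead_filter_lt elim_round_subpred Fe).
    by rewrite -Hy elim_round_pile.
  by rewrite elim_round_eligible eqxx andbF.
by rewrite Hy in Py; apply: (value_transferred inv cN0 (esym Py) hf fW yf).
Qed.

End ElimRound.

Lemma count_inv_elim_round s s' :
  elim_round S s s' -> count_inv s -> (forall w, w \in W -> w \notin elim s') ->
  count_inv s'.
Proof.
case=> _ [_ [e [_ [_ [seated_eq [elim_eq move_e]]]]]] inv.
exact: count_inv_elim inv seated_eq elim_eq move_e.
Qed.

Lemma natr_count (P : pred (seq C)) :
  (count P bs)%:R = \sum_(i < n) (P (ballot i))%:R :> R.
Proof.
rewrite -sum1_count natr_sum big_mkcond (big_nth [::]) big_mkord.
by apply: eq_bigr => i _; case: ifP.
Qed.

Lemma L_basic_le_tally s g :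
  count_inv s -> is_eligible s g -> (L_basic bs g)%:R <= cand_tally s g.
Proof.
move=> inv ge; rewrite natr_count /cand_tally [X in _ <= X]big_mkcond /=.
apply: ler_sum => i _; case: eqP => [hg|_]; last first.
  by case: ifP => _; [case/andP: (value_in01 inv i)|].
by rewrite (pile_first_eligible inv) (first_eligible_head hg ge) eqxx
  (value_first_pref inv hg ge).
Qed.

Lemma tally_le_U_comp s x g :
  count_inv s -> is_eligible s g -> cand_tally s x <= (U_comp bs x g)%:R.
Proof.
move=> inv ge; rewrite natr_count /cand_tally big_mkcond /=.
apply: ler_sum => i _; case: eqP => [Px|_]; last by case: eqP.
have Fx : first_eligible s (ballot i) = Some x by rewrite -pile_first_eligible.
have /andP[xe _] := mem_ohead_filter Fx.
rewrite /first_in (ohead_filter_subpred _ Fx) ?inE ?eqxx //=.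
  by case/andP: (value_in01 inv i).
by move=> y; rewrite !inE => /orP[] /eqP ->.
Qed.

Lemma elim_not_AG s e :
  count_inv s -> is_eligible s e -> is_eligible s c ->
  (forall x, is_eligible s x -> cand_tally s e <= cand_tally s x) ->
  ~ AG bs e c.
Proof.
move=> inv ee ce emin; apply/negP; rewrite -leqNgt -(ler_nat R).
apply: le_trans (L_basic_le_tally inv ee) _.
exact: le_trans (emin c ce) (tally_le_U_comp c inv ee).
Qed.

Lemma not_AG_self x : ~ AG bs x x.
Proof.
apply/negP; rewrite -leqNgt; apply: sub_count => -[|a l] //= /eqP[->].
by rewrite /first_in /= !inE eqxx.
Qed.

Lemma u_complex_ge0 (G : {set C}) beta :
  (forall w, w \in W -> 0 <= tau w) -> 0 <= u_complex c b W tau G beta.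
Proof.
move=> tau_ge0; rewrite /u_complex.
case: ifP => _ //; case: ifP => _ //; case: ifP => _ //.
case: (ohead beta) => [f|] //; case: ifP => fW //.
apply: (big_ind (fun x => 0 <= x)) => [|x y x0 y0|w wW]; last exact: tau_ge0.
  exact: tau_ge0.
by rewrite le_max x0.
Qed.

Lemma value_le_u_complex s (G : {set C}) i :
  count_inv s -> b != c -> c \notin W -> c \notin G ->
  is_eligible s b -> (forall g, g \in G :\: W -> is_eligible s g) ->
  pile s i = Some c -> value s i <= u_complex c b W tau G (ballot i).
Proof.
move=> inv bc cW cG be GW_eligible Pc.
have Fc : first_eligible s (ballot i) = Some c by rewrite -pile_first_eligible.
have /andP[ce cb] := mem_ohead_filter Fc.
have first_c x : is_eligible s x -> first_in [set x; c] (ballot i) = Some c.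
  move=> xe; apply: ohead_filter_subpred Fc _; last by rewrite !inE eqxx orbT.
  by move=> y; rewrite !inE => /orP[] /eqP ->.
rewrite /u_complex; case: existsP => [[g /andP[gGW /eqP]]|_].
  rewrite first_c ?GW_eligible // => -[cg].
  by move: gGW; rewrite -cg in_setD (negbTE cG) andbF.
rewrite cb /=; case: eqP => [|_].
  by rewrite first_c // => -[/eqP]; rewrite eq_sym (negbTE bc).
case hf: (ohead (ballot i)) => [f|]; last by case/andP: (value_in01 inv i).
case: ifP => fW; last by case/andP: (value_in01 inv i).
have cN : c \notin seated s by case/andP: ce.
have cf : c != f by apply: contraNneq cW => ->.
have [w wW [lt_wc V]] := value_transferred inv cN Pc hf fW cf.
apply: le_trans V _; apply: le_bigmax_seq wW.
by rewrite in_take // -index_mem (ltn_trans lt_wc) ?index_mem.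
Qed.

Lemma step_mono (s s' : state) :
  step S s s' -> seated s \subset seated s' /\ elim s \subset elim s'.
Proof.
case=> [[_ [_ [-> [-> _]]]]|
  [[_ [_ [e [_ [_ [-> [-> _]]]]]]]|[_ [_ [-> [-> _]]]]]];
  by rewrite ?subsetUl ?subsetUr ?subxx.
Qed.

Lemma step_seated_notin_elim (s s' : state) : step S s s' ->
  (forall x, x \in seated s -> x \notin elim s) ->
  forall x, x \in seated s' -> x \notin elim s'.
Proof.
move=> st D x.
case: st => [[_ [_ [-> [-> _]]]]|
  [[_ [_ [e [ee [_ [-> [-> _]]]]]]]|[_ [_ [-> [-> _]]]]]].
- by rewrite in_setU inE => /orP[/D //|/andP[/andP[_ ->]]].
- move=> xs; rewrite in_setU1 negb_or (D x xs) andbT.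
  by apply: contraTneq ee => <-; rewrite /is_eligible xs.
- by rewrite in_setU inE => /orP[/D //|/andP[_ ->]].
Qed.

Section Trace.
Variables (tr : nat -> state) (k : nat).
Hypotheses (tr0 : tr 0%N = init_state R bs)
  (steps : forall t, (t < k)%N -> step S (tr t) (tr t.+1)).

Lemma count_mono t t' : (t <= t')%N -> (t' <= k)%N ->
  seated (tr t) \subset seated (tr t') /\ elim (tr t) \subset elim (tr t').
Proof.
move=> le_tt' le_t'k.
apply: (@homo_leq_in _ [pred t | t <= k]%N tr
  (fun s s' => seated s \subset seated s' /\ elim s \subset elim s')) => //.
- move=> s2 s1 s3 [h1 h2] [h3 h4].
  by split; [exact: subset_trans h1 h3 | exact: subset_trans h2 h4].
- by move=> i i' _; rewrite !inE => i'k m /andP[_ /ltnW /leq_trans]; apply.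
- by move=> i _; rewrite inE => ik; exact: step_mono (steps ik).
- by rewrite inE (leq_trans le_tt').
Qed.

Lemma eligible_anti t t' x : (t <= t')%N -> (t' <= k)%N ->
  is_eligible (tr t') x -> is_eligible (tr t) x.
Proof.
move=> le_tt' le_t'k; have [s1 e1] := count_mono le_tt' le_t'k.
rewrite /is_eligible => /andP[xs xe].
by rewrite (contra (subsetP s1 x) xs) (contra (subsetP e1 x) xe).
Qed.

Lemma seated_notin_elim t x :
  (t <= k)%N -> x \in seated (tr t) -> x \notin elim (tr t).
Proof.
elim: t x => [|t IHt] x tk; first by rewrite tr0 inE.
by apply: step_seated_notin_elim (steps tk) _ x => y; apply: IHt (ltnW tk).
Qed.

Hypothesis W_seated : forall w, w \in W -> w \in seated (tr k).

Lemma W_notin_elim t w : (t <= k)%N -> w \in W -> w \notin elim (tr t).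
Proof.
move=> tk wW; have [_ e1] := count_mono tk (leqnn k).
exact: contra (subsetP e1 w) (seated_notin_elim (leqnn k) (W_seated wW)).
Qed.

Variable j : nat.
Hypotheses (jk : (j <= k)%N) (bj : is_eligible (tr j) b).

Lemma step_before_j t : (t < j)%N ->
  quota_round S (tr t) (tr t.+1) \/ elim_round S (tr t) (tr t.+1).
Proof.
move=> tj; case: (steps (leq_trans tj jk)) => [|[|[_ [_ [seated_eq _]]]]];
  [by left | by right |].
have bt1 : b \in seated (tr t.+1).
  by rewrite seated_eq in_setU inE (eligible_anti (ltnW tj) jk bj) orbT.
have [s1 _] := count_mono tj jk.
by move: bj; rewrite /is_eligible (subsetP s1 _ bt1).
Qed.

Hypotheses
  (seated_ok : forall t x, (t <= k)%N -> x \in seated (tr t) ->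
     x \in W :|: [set b; c])
  (tau_ok : forall t w i, (t < k)%N -> quota_round S (tr t) (tr t.+1) ->
     w \in W -> reaches_quota S (tr t) w -> pile (tr t) i = Some w ->
     value (tr t.+1) i <= tau w).

Lemma count_inv_trace t : (t <= j)%N -> count_inv (tr t).
Proof.
elim: t => [|t IHt] tj; first by rewrite tr0; apply: count_inv_init.
have tk := leq_trans tj jk.
case: (step_before_j tj) => [q|e].
  apply: (count_inv_quota q (IHt (ltnW tj))) => [x||w i].
  - exact: seated_ok tk.
  - exact: eligible_anti tj jk bj.
  - exact: tau_ok tk q.
by apply: count_inv_elim_round e (IHt (ltnW tj)) _ => w; apply: W_notin_elim.
Qed.

Lemma G_notin_W_eligible (G : {set C}) : (forall g, g \in G -> AG bs g c) ->
  is_eligible (tr j) c -> forall g, g \in G :\: W -> is_eligible (tr j) g.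
Proof.
move=> HG ce g; rewrite in_setD => /andP[gW gG]; apply/negPn/negP => gNe.
have gE : g \in elim (tr j).
  move: (gNe); rewrite /is_eligible negb_and !negbK => /orP[gs|//].
  have := seated_ok jk gs; rewrite !inE (negbTE gW) /=.
  by case/orP => /eqP g_bc; move: gNe; rewrite g_bc ?bj ?ce.
have gN0 : g \notin elim (tr 0) by rewrite tr0 inE.
have [t tj /andP[gNt gt1]] := @ex_switch (fun t => g \in elim (tr t)) j gN0 gE.
case: (step_before_j tj) =>
  [[_ [_ [_ [elim_eq _]]]]|[_ [_ [e [ee [emin [_ [elim_eq _]]]]]]]].
  by rewrite elim_eq (negbTE gNt) in gt1.
move: gt1; rewrite elim_eq in_setU1 (negbTE gNt) orbF => /eqP ge; subst e.
exact: elim_not_AG (count_inv_trace (ltnW tj)) ee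
  (eligible_anti (ltnW tj) jk ce) emin (HG _ gG).
Qed.

End Trace.

End Count.

Theorem lemma4 (C : finType) (R : realFieldType)
  (bs : seq (seq C)) (S : nat)
  (W : {set C}) (b c : C) (tau : C -> R) (G : {set C})
  (tr : nat -> @state C R bs) (k : nat) :
  all uniq bs ->
  is_count S tr k ->
  b != c -> b \notin W -> c \notin W ->
  (forall w, w \in W -> 0 <= tau w) ->
  (forall g, g \in G -> AG bs g c) ->
  (* only candidates in W, b, c can be seated *)
  (forall j x, (j <= k)%N -> x \in seated (tr j) -> x \in W :|: [set b; c]) ->
  (* all candidates in W are seated (by the end of the count) *)
  (forall w, w \in W -> w \in seated (tr k)) ->
  (* transfer values of ballots in w's pile when w is seated are at most tau w *)
  (forall j w i, (j < k)%N -> quota_round S (tr j) (tr j.+1) -> w \in W ->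
     reaches_quota S (tr j) w -> pile (tr j) i = Some w ->
     value (tr j.+1) i <= tau w) ->
  (* at every point of the count at which b is eligible *)
  forall j, (j <= k)%N -> is_eligible (tr j) b ->
    cand_tally (tr j) c <= U_complex bs c b W tau G.
Proof.
move=> _ [tr0 [steps _]] bc _ cW tau_ge0 HG seated_ok W_seated tau_ok j jk bj.
have inv := count_inv_trace tr0 steps W_seated jk bj seated_ok tau_ok (leqnn j).
have cG : c \notin G by apply/negP => /HG; apply: not_AG_self.
rewrite /U_complex (big_nth [::]) big_mkord /cand_tally big_mkcond /=.
apply: ler_sum => i _; case: eqP => [Pc|_]; last exact: u_complex_ge0.
apply: value_le_u_complex => //.
exact: (G_notin_W_eligible tr0 steps W_seated jk bj seated_ok tau_ok HG
  (pile_eligible inv Pc)).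
Qed.
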